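(* Let $K_\infty=s_1s_2s_3\dots$ be the fixed point beginning with $1$ of the substitution $1\mapsto10$, $0\mapsto11$, let $t_k=\sum_{i=1}^k s_i\pmod 2$ and $\tau_\infty=\sum_{k\ge1}t_k2^{-k}$. Then the digits $0$ and $1$ each occur in the sequence $t_1t_2t_3\dots$ with asymptotic frequency $1/2$, but $\tau_\infty$ is not a normal number in base $2$ (i.e. it is not true that every binary word of length $n$ occurs in $t_1t_2\dots$ with asymptotic frequency $2^{-n}$ for all $n$). *)

From mathcomp Require Import all_boot.
From Stdlib Require Import Reals.

Definition subst1 (b : bool) : seq bool :=
  if b then [:: true; false] else [:: true; true].
Definition subst (w : seq bool) : seq bool := flatten (map subst1 w).

(* K_infty = lim subst^n [1]; the word subst^(i+1) [1] has length 2^(i+1) > i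
   and is a prefix of the fixed point beginning with 1.
   s i  =  s_{i+1}  (0-indexed). *)
Definition s (i : nat) : bool := nth false (iter i.+1 subst [:: true]) i.

(* t k = t_{k+1} = (s_1 + ... + s_{k+1}) mod 2  (0-indexed). *)
Definition t (k : nat) : bool := odd (\sum_(i < k.+1) (s i : nat)).

(* tau_infty = sum_{k>=1} t_k 2^{-k}: its binary digit sequence is t,
   so normality of tau_infty is stated as normality of t. *)
Definition tau_infty_partial (N : nat) : R :=
  sum_f_R0 (fun k => ((if t k then 1 else 0) / 2 ^ k.+1)%R) N.

Definition occ_count (w : seq bool) (N : nat) : nat :=
  count (fun k => [seq t (k + j) | j <- iota 0 (size w)] == w) (iota 0 N).

Definition has_freq (w : seq bool) (l : R) : Prop :=
  Un_cv (fun N => (INR (occ_count w N) / INR N)%R) l.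

Definition t_normal : Prop :=
  forall (n : nat) (w : seq bool), size w = n -> has_freq w (/ 2 ^ n)%R.

(* Every image letter of the substitution begins with 1, so s_{2m+1} = 1 for
   all m and hence t_{2m+1} and t_{2m} are complementary: t_1 t_2 ... is
   t_1 followed by a concatenation of blocks 01 and 10.  Such a sequence has
   each digit with frequency 1/2, but never contains 000, so it is not normal. *)
From mathcomp Require Import all_boot zify.
From Stdlib Require Import Reals Lra.

Lemma size_subst w : size (subst w) = (size w).*2.
Proof. by elim: w => //= b w IH; rewrite /subst /= size_cat -/(subst w) IH; case: b. Qed.

Lemma nth_subst_double w j : nth false (subst w) j.*2 = (j < size w).
Proof.
elim: w j => [|b w IH] [|j] //=; rewrite /subst /= -/(subst w) ?doubleS.
  by case: b.
by case: b; rewrite /= IH.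
Qed.

Lemma size_iter_subst n : size (iter n subst [:: true]) = expn 2 n.
Proof. by elim: n => //= n IH; rewrite size_subst IH -muln2 expnSr. Qed.

Lemma s_double m : s m.*2.
Proof.
rewrite /s /= nth_subst_double size_iter_subst.
by apply: leq_ltn_trans (ltn_expl _ (ltnSn 1)); rewrite -addnn leq_addr.
Qed.

Lemma t_succ k : t k.+1 = t k (+) s k.+1.
Proof. by rewrite /t big_ord_recr /= oddD; case: (s k.+1). Qed.

Lemma t_double_succ m : t m.*2.+2 = ~~ t m.*2.+1.
Proof. by rewrite t_succ -doubleS s_double addbT. Qed.

Section ComplementaryPairs.

Variable u : nat -> bool.
Hypothesis u_pair : forall m, u m.*2.+2 = ~~ u m.*2.+1.

Lemma count_pairs_odd d M :
  count (fun k => u k == d) (iota 0 M.*2.+1) = M + (u 0 == d).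
Proof.
elim: M => [|M IH]; first by rewrite /= addn0.
have -> : M.+1.*2.+1 = M.*2.+1 + 2 by rewrite doubleS; lia.
rewrite iotaD count_cat {}IH /= u_pair.
by case: (u M.*2.+1) d => [] [] /=; lia.
Qed.

Lemma count_pairs_bounds d N (c := count (fun k => u k == d) (iota 0 N)) :
  N <= c.*2 + 2 /\ c.*2 <= N + 2.
Proof.
rewrite {}/c; case: N => [|N] //; rewrite -(odd_double_half N).
case: (odd N); rewrite ?add1n ?add0n; last first.
  by rewrite count_pairs_odd; case: (u 0 == d) => /=; lia.
have -> : N./2.*2.+2 = N./2.*2.+1 + 1 by lia.
rewrite iotaD count_cat count_pairs_odd /=.
by case: (u 0 == d) (u N./2.*2.+1 == d) => [] [] /=; lia.
Qed.

Lemma no_three_equal k d :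
  [seq u (k + j) | j <- iota 0 3] != [:: d; d; d].
Proof.
rewrite /= !eqseq_cons andbT !addnS addn0 -(odd_double_half k).
by case: (odd k); rewrite ?add1n ?add0n u_pair; case: (u k./2.*2.+1) d => [] [];
  rewrite ?andbF.
Qed.

End ComplementaryPairs.

Lemma Un_cv_half_of_bounds (c : nat -> nat) :
  (forall N, N <= (c N).*2 + 2 /\ (c N).*2 <= N + 2) ->
  Un_cv (fun N => INR (c N) / INR N)%R (1 / 2)%R.
Proof.
move=> bounds eps eps_gt0.
have [N0 [N0_gt_inv N0_gt0]] := archimed_cor1 (eps / 2)%R ltac:(lra).
exists N0 => N N0_le_N.
have [/leP lo /leP hi] := bounds N.
move: lo hi => /le_INR lo /le_INR hi; rewrite -addnn !plus_INR /= in lo hi.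
have N0_pos : (0 < INR N0)%R := lt_0_INR _ N0_gt0.
have N_large : (2 < INR N * eps)%R.
  have := le_INR _ _ N0_le_N; have := Rinv_r (INR N0); nra.
have N_pos : (0 < INR N)%R by nra.
set x := (INR (c N) / INR N)%R.
have c_eq : INR (c N) = (x * INR N)%R by rewrite /x; field; lra.
rewrite c_eq in lo hi.
by rewrite /R_dist; apply: Rabs_def1; nra.
Qed.

Lemma occ_count_single d N :
  occ_count [:: d] N = count (fun k => t k == d) (iota 0 N).
Proof. by apply: eq_count => k /=; rewrite addn0 eqseq_cons andbT. Qed.

Lemma freq_digit d : has_freq [:: d] (1 / 2)%R.
Proof.
apply: Un_cv_half_of_bounds => N; rewrite occ_count_single.
exact: count_pairs_bounds t_double_succ d N.
Qed.

Lemma occ_count_triple d N : occ_count [:: d; d; d] N = 0.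
Proof.
rewrite /occ_count (eq_count (a2 := pred0)) ?count_pred0 // => k.
exact/negbTE/no_three_equal/t_double_succ.
Qed.

Lemma has_freq_absent w l :
  (forall N, occ_count w N = 0) -> has_freq w l -> l = 0%R.
Proof.
move=> absent freq; apply: (UL_sequence _ _ _ freq) => eps eps_gt0.
by exists 0 => N _; rewrite absent /R_dist /= Rdiv_0_l Rminus_0_r Rabs_R0.
Qed.

Theorem mainTheorem10 :
  (forall d : bool, has_freq [:: d] (1 / 2)%R) /\ ~ t_normal.
Proof.
split; first exact: freq_digit.
move=> normal.
have := has_freq_absent _ _ (occ_count_triple false) (normal 3 [:: false; false; false] erefl).
by rewrite /=; lra.
Qed.
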